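(* Let $k,m\in\mathbb{N}$ with $m<k\le 2m$, $k$ even, and $\gcd(2k+1,2(2m+1))=1$; let $a>0$ satisfy $\frac{1}{4km+3k+m+1}\le\frac{a}{2k+1}\le\frac{1}{4km+k+3m+1}$ and put $b=\frac{2k+1}{2a(2m+1)}$ and $Y=\frac{1}{2a(2m+1)}$. For $s=0,\dots,4m+1$, $n=0,\dots,2k$ define $X_{sn}=\frac{s}{2(2m+1)}-\frac{n}{2k+1}$, $\Phi_{sn}=\sum_{l\in\mathbb{Z}}Q_2\big(2a(2m+1)(l+X_{sn})\big)$ with $Q_2(x)=(1-|x|)\chi_{[-1,1]}(x)$, and $A_{sn}=\Phi_{sn}-\Phi_{s,2k+1-n}$ for $n=1,\dots,k$. Then for $s=1,\dots,m$ and $n=1,\dots,k/2$, $$A_{sn}=\begin{cases}2n/b,& 0<X_{sn}<Y,\\ 2as,& -Y<X_{sn}<0.\end{cases}$$ *)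

From Stdlib Require Import Reals Lra Lia Arith.
From Coquelicot Require Import Coquelicot.
Open Scope R_scope.

Definition Q2 (x : R) : R :=
  if Rle_dec (Rabs x) 1 then 1 - Rabs x else 0.

(* Sum over l in Z of f(l), as sum_{l>=0} f(l) + sum_{l>=1} f(-l). *)
Definition sumZ (f : Z -> R) : R :=
  Series (fun l : nat => f (Z.of_nat l)) + Series (fun l : nat => f (- Z.of_nat (S l))%Z).

Definition Xsn (k m s n : nat) : R :=
  INR s / (2 * (2 * INR m + 1)) - INR n / (2 * INR k + 1).

Definition Phi (k m : nat) (a : R) (s n : nat) : R :=
  sumZ (fun l => Q2 (2 * a * (2 * INR m + 1) * (IZR l + Xsn k m s n))).

Definition Asn (k m : nat) (a : R) (s n : nat) : R :=
  Phi k m a s n - Phi k m a s (2 * k + 1 - n)%nat.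

Definition bpar (m k : nat) (a : R) : R := (2 * INR k + 1) / (2 * a * (2 * INR m + 1)).
Definition Ypar (m : nat) (a : R) : R := 1 / (2 * a * (2 * INR m + 1)).

(** With [c = 2a(2m+1)], [u = s/(2(2m+1))] and [v = n/(2k+1)] one has
    [X_sn = u - v] and [X_{s,2k+1-n} = u + v - 1].  The bounds on [a] say
    exactly that the tent [Q2 (c x)] is narrow enough for [c (u + v) <= 1] and
    [c (1 - u - v) >= 1] to hold, so each periodization [Phi] reduces to the
    single term of the lattice point nearest to [-X], and
    [A_sn = Q2 (c u - c v) - Q2 (c u + c v) = 2 min (c u, c v)]. *)

From Stdlib Require Import Reals Arith Lra Lia.
From Coquelicot Require Import Coquelicot.
Open Scope R_scope.

Lemma Series_single_0 (g : nat -> R) :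
  (forall i, (0 < i)%nat -> g i = 0) -> Series g = g O.
Proof.
  intros g0. apply is_series_unique.
  apply filterlim_ext_loc with (fun _ => g O); [|apply filterlim_const].
  exists O; intros i _. induction i as [|i IH]; [symmetry; apply sum_O|].
  rewrite sum_Sn, <- IH, (g0 (S i)) by lia. symmetry; apply Rplus_0_r.
Qed.

Lemma Series_single (g : nat -> R) (j : nat) :
  (forall i, i <> j -> g i = 0) -> Series g = g j.
Proof.
  intros g0. rewrite (Series_incr_n_aux g j) by (intros i ?; apply g0; lia).
  rewrite Series_single_0, Nat.add_0_r; [reflexivity|].
  intros i ?. apply g0. lia.
Qed.

Lemma sumZ_single (f : Z -> R) (j : nat) :
  (forall l, l <> Z.of_nat j -> f l = 0) -> sumZ f = f (Z.of_nat j).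
Proof.
  intros f0. unfold sumZ.
  rewrite (Series_single _ j) by (intros i ?; apply f0; lia).
  rewrite (Series_single _ O) by (intros i ?; apply f0; lia).
  rewrite (f0 (- Z.of_nat 1)%Z) by lia. apply Rplus_0_r.
Qed.

Lemma Q2_out (y : R) : 1 <= Rabs y -> Q2 y = 0.
Proof. intros Hy. unfold Q2. destruct Rle_dec; lra. Qed.

Lemma Q2_nonneg (y : R) : 0 <= y <= 1 -> Q2 y = 1 - y.
Proof. intros Hy. unfold Q2. rewrite Rabs_right by lra. destruct Rle_dec; lra. Qed.

Lemma Q2_nonpos (y : R) : -1 <= y <= 0 -> Q2 y = 1 + y.
Proof. intros Hy. unfold Q2. rewrite Rabs_left1 by lra. destruct Rle_dec; lra. Qed.

Lemma Q2_sub_add (x y : R) :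
  0 <= x -> 0 <= y -> x + y <= 1 -> Q2 (x - y) - Q2 (x + y) = 2 * Rmin x y.
Proof.
  intros x0 y0 xy1. rewrite (Q2_nonneg (x + y)) by lra.
  destruct (Rle_dec y x).
  - rewrite Q2_nonneg, Rmin_right by lra. ring.
  - rewrite Q2_nonpos, Rmin_left by lra. ring.
Qed.

(* Only the lattice point [l = j] lies within [1/c] of [-X]. *)
Lemma sumZ_Q2_single (c X : R) (j : nat) :
  0 < c -> 1 <= c * (X + INR j + 1) -> 1 <= c * (1 - INR j - X) ->
  sumZ (fun l => Q2 (c * (IZR l + X))) = Q2 (c * (INR j + X)).
Proof.
  intros c0 Hright Hleft. rewrite (sumZ_single _ j), <- INR_IZR_INZ; [reflexivity|].
  intros l Hl. apply Q2_out.
  destruct (Z.lt_ge_cases (Z.of_nat j) l) as [Hlj|Hlj].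
  - assert (INR j + 1 <= IZR l).
    { rewrite INR_IZR_INZ, <- plus_IZR. apply IZR_le. lia. }
    rewrite Rabs_right; nra.
  - assert (IZR l <= INR j - 1).
    { rewrite INR_IZR_INZ, <- minus_IZR. apply IZR_le. lia. }
    rewrite Rabs_left1; nra.
Qed.

Section Periodized_tents.

Variables (k m : nat) (a : R).
Hypothesis a_pos : 0 < a.
Hypothesis a_lower :
  1 / (4 * INR k * INR m + 3 * INR k + INR m + 1) <= a / (2 * INR k + 1).
Hypothesis a_upper :
  a / (2 * INR k + 1) <= 1 / (4 * INR k * INR m + INR k + 3 * INR m + 1).

Local Notation c := (2 * a * (2 * INR m + 1)).
Local Notation u s := (INR s / (2 * (2 * INR m + 1))).
Local Notation v n := (INR n / (2 * INR k + 1)).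

Lemma Xsn_mirror (s n : nat) :
  (n <= 2 * k + 1)%nat -> Xsn k m s (2 * k + 1 - n) = u s + v n - 1.
Proof.
  intros Hn. unfold Xsn. rewrite minus_INR, plus_INR, mult_INR by exact Hn.
  simpl. field. pose proof (pos_INR k). pose proof (pos_INR m). lra.
Qed.

Lemma window_bounds (s n : nat) :
  (s <= m)%nat -> (2 * n <= k)%nat ->
  c * u s + c * v n <= 1 /\ 1 <= c * (1 - u s - v n).
Proof.
  intros Hs Hn. apply le_INR in Hs. apply le_INR in Hn. rewrite mult_INR in Hn.
  simpl in Hn. pose proof (pos_INR k). pose proof (pos_INR m). pose proof (pos_INR n).
  replace (c * u s + c * v n)
    with (a / (2 * INR k + 1) * ((2 * INR k + 1) * INR s + 2 * (2 * INR m + 1) * INR n))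
    by (field; lra).
  replace (c * (1 - u s - v n))
    with (a / (2 * INR k + 1) * (2 * (2 * INR k + 1) * (2 * INR m + 1)
            - (2 * INR k + 1) * INR s - 2 * (2 * INR m + 1) * INR n))
    by (field; lra).
  set (K := INR k) in *. set (M := INR m) in *.
  set (S := INR s) in *. set (N := INR n) in *.
  set (w := a / (2 * K + 1)) in *.
  assert (w0 : 0 < w) by (apply Rdiv_lt_0_compat; lra).
  assert (Hup : w * (4 * K * M + K + 3 * M + 1) <= 1).
  { apply (Rmult_le_compat_r (4 * K * M + K + 3 * M + 1)) in a_upper; [|nra].
    replace (1 / _ * _) with 1 in a_upper by (field; nra). exact a_upper. }
  assert (Hlow : 1 <= w * (4 * K * M + 3 * K + M + 1)).
  { apply (Rmult_le_compat_r (4 * K * M + 3 * K + M + 1)) in a_lower; [|nra].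
    replace (1 / _ * _) with 1 in a_lower by (field; nra). exact a_lower. }
  (* [(2K+1) M + (2M+1) K] is the extreme value, at [s = m] and [2n = k]. *)
  assert (Hmass : (2 * K + 1) * S + 2 * (2 * M + 1) * N <= 4 * K * M + K + M) by nra.
  split; nra.
Qed.

Lemma Asn_tents (s n : nat) :
  (s <= m)%nat -> (2 * n <= k)%nat ->
  Asn k m a s n = Q2 (c * u s - c * v n) - Q2 (c * u s + c * v n).
Proof.
  intros Hs Hn. destruct (window_bounds s n Hs Hn) as [Hin Hout].
  pose proof (pos_INR k). pose proof (pos_INR m).
  pose proof (pos_INR s). pose proof (pos_INR n).
  assert (u0 : 0 <= u s) by (apply Rdiv_le_0_compat; lra).
  assert (v0 : 0 <= v n) by (apply Rdiv_le_0_compat; lra).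
  assert (c0 : 0 < c) by nra.
  unfold Asn, Phi. rewrite Xsn_mirror by lia.
  rewrite (sumZ_Q2_single _ _ 0), (sumZ_Q2_single _ _ 1); simpl; unfold Xsn.
  1: f_equal; f_equal; ring.
  all: nra.
Qed.

End Periodized_tents.

Theorem lemma3p4 (k m : nat) (a : R)
  (hmk : (m < k)%nat) (hkm : (k <= 2 * m)%nat) (hev : Nat.Even k)
  (hgcd : Nat.gcd (2 * k + 1) (2 * (2 * m + 1)) = 1%nat)
  (ha : 0 < a)
  (hlow : 1 / (4 * INR k * INR m + 3 * INR k + INR m + 1) <= a / (2 * INR k + 1))
  (hup : a / (2 * INR k + 1) <= 1 / (4 * INR k * INR m + INR k + 3 * INR m + 1))
  (s n : nat) (hs1 : (1 <= s)%nat) (hs2 : (s <= m)%nat)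
  (hn1 : (1 <= n)%nat) (hn2 : (n <= k / 2)%nat) :
  (0 < Xsn k m s n < Ypar m a -> Asn k m a s n = 2 * INR n / bpar m k a) /\
  (- Ypar m a < Xsn k m s n < 0 -> Asn k m a s n = 2 * a * INR s).
Proof.
  assert (h2n : (2 * n <= k)%nat) by (pose proof (Nat.Div0.mul_div_le k 2); lia).
  pose proof (pos_INR k). pose proof (pos_INR m).
  pose proof (pos_INR s). pose proof (pos_INR n).
  rewrite (Asn_tents k m a ha hlow hup s n hs2 h2n).
  destruct (window_bounds k m a ha hlow hup s n hs2 h2n) as [Hin _].
  assert (c0 : 0 < 2 * a * (2 * INR m + 1)) by nra.
  assert (u0 : 0 <= INR s / (2 * (2 * INR m + 1))) by (apply Rdiv_le_0_compat; lra).
  assert (v0 : 0 <= INR n / (2 * INR k + 1)) by (apply Rdiv_le_0_compat; lra).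
  rewrite Q2_sub_add by (try apply Rmult_le_pos; lra).
  (* The bounds [X < Y] and [-Y < X] already follow from [window_bounds]. *)
  split.
  - intros [HX _]. unfold Xsn in HX.
    rewrite Rmin_right by (apply Rmult_le_compat_l; lra).
    unfold bpar. field. repeat split; lra.
  - intros [_ HX]. unfold Xsn in HX.
    rewrite Rmin_left by (apply Rmult_le_compat_l; lra).
    field. lra.
Qed.
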